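(* Let $D$ be a period domain for polarized Hodge structures of weight $4$, $F\in D$, and $E\subset\mathfrak g^{-1,1}$ an integral element of the infinitesimal period relation at $F$ (i.e. an abelian subspace). Let $\zeta\in H_{\mathbb R}\cap H^{2,2}_F$, let $E_\zeta=\{\varphi\in E:\varphi(\zeta)=0\text{ in }H^{1,3}\}$, and let $$\sigma_\zeta=\dim\,\mathrm{Image}\{E_\zeta\otimes H^{4,0}\to H^{3,1},\ \varphi\otimes\omega\mapsto\varphi(\omega)\}.$$ Then $\mathrm{codim}_E E_\zeta\le h^{1,3}-\sigma_\zeta$.
   Context: $H$ is a finite-dimensional $\mathbb Q$-vector space with non-degenerate symmetric bilinear form $Q$; a polarized Hodge structure of weight 4 is $H_{\mathbb C}=\bigoplus_{p+q=4}H^{p,q}$, $\overline{H^{p,q}}=H^{q,p}$, $F^p=\bigoplus_{p'\ge p}H^{p',4-p'}$, $Q(F^p,F^{5-p})=0$, $Q(Cu,\bar u)>0$ for $u\neq 0$ ($C=i^{p-q}$ on $H^{p,q}$); $D$ is the period domain of such structures with fixed Hodge numbers $h^{p,q}$. $\mathfrak g$ is the Lie algebra of $\mathrm{Aut}(H,Q)$ and $\mathfrak g^{-1,1}=\{X\in\mathfrak g_{\mathbb C}:X(H^{p,q})\subset H^{p-1,q+1}\ \forall p,q\}$; it is the fibre at $F$ of the horizontal distribution whose annihilator $I$ is the infinitesimal period relation. Integral elements of $I$ at $F$ are the subspaces $E\subset\mathfrak g^{-1,1}$ with $[\varphi,\psi]=0$ for all $\varphi,\psi\in E$. $E_\zeta$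 is the intersection of $E$ with the tangent space at $F$ of the Noether–Lefschetz locus $D_\zeta=\{F'\in D:\zeta\in H^{2,2}_{F'}\}$. *)

(* Vectors of H_C = C^n are row vectors, and an endomorphism X
   acts on the right:  phi_X(u) := u *m X. *)
From mathcomp Require Import all_boot all_order all_algebra.
From mathcomp Require Import complex Rstruct.
Set Implicit Arguments. Unset Strict Implicit. Unset Printing Implicit Defensive.
Import Order.TTheory GRing.Theory Num.Theory.
Local Open Scope ring_scope.

Definition CC : Type := complex Rdefinitions.R.

Section Hodge.
Variable n : nat.

Definition Qc (Qm : 'M[rat]_n) : 'M[CC]_n := map_mx ratr Qm.
Definition bil (Qm : 'M[rat]_n) (u v : 'rV[CC]_n) : CC := (u *m Qc Qm *m v^T) 0 0.

Definition vconj (u : 'rV[CC]_n) : 'rV[CC]_n := map_mx (fun x => x^*) u.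

(* H p stands for H^{p,4-p}, p = 0..4.  Hz extends the indexing to all
   integers p, with H^{p,4-p} = 0 for p outside [0,4]. *)
Definition Hz (H : 'I_5 -> {vspace 'rV[CC]_n}) (p : int) : {vspace 'rV[CC]_n} :=
  match p with
  | Posz k => if (k < 5)%N then H (inord k) else 0%VS
  | Negz _ => 0%VS
  end.

Definition Fil (H : 'I_5 -> {vspace 'rV[CC]_n}) (p : nat) : {vspace 'rV[CC]_n} :=
  (\sum_(i < 5 | (p <= i)%N) H i)%VS.

Definition is_Weil (H : 'I_5 -> {vspace 'rV[CC]_n}) (W : 'M[CC]_n) : Prop :=
  forall (p : 'I_5) u, u \in H p ->
    u *m W = ('i ^ ((p : nat)%:Z - (4 - p : nat)%:Z)) *: u.

Definition is_PHS4 (Qm : 'M[rat]_n) (H : 'I_5 -> {vspace 'rV[CC]_n}) : Prop :=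
  [/\ (Qm^T = Qm /\ Qm \in unitmx),
      (directv (\sum_(i < 5) H i) /\ (\sum_(i < 5) H i)%VS = fullv),
      (forall (p : 'I_5) u, (vconj u \in H p) = (u \in H (rev_ord p))),
      (forall (p : nat) u v, u \in Fil H p -> v \in Fil H (5 - p) -> bil Qm u v = 0) &
      (forall W, is_Weil H W -> forall u, u != 0 -> 0 < bil Qm (u *m W) (vconj u))].

Definition in_g_m11 (Qm : 'M[rat]_n) (H : 'I_5 -> {vspace 'rV[CC]_n}) (X : 'M[CC]_n) : Prop :=
  (forall u v, bil Qm (u *m X) v + bil Qm u (v *m X) = 0) /\
  (forall (p : int) u, u \in Hz H p -> u *m X \in Hz H (p - 1)).

Definition integral_element (Qm : 'M[rat]_n) (H : 'I_5 -> {vspace 'rV[CC]_n})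
    (E : {vspace 'M[CC]_n}) : Prop :=
  (forall X, X \in E -> in_g_m11 Qm H X) /\
  (forall X Y, X \in E -> Y \in E -> X *m Y - Y *m X = 0).

Definition Ezeta (E : {vspace 'M[CC]_n}) (zeta : 'rV[CC]_n) : {vspace 'M[CC]_n} :=
  (E :&: lker (linfun (fun X : 'M[CC]_n => zeta *m X)))%VS.

(* Image of the multiplication map  E' (x) W -> H_C,  phi (x) w |-> phi(w):
   the span of the images of the tensors of basis vectors. *)
Definition mult_image (E' : {vspace 'M[CC]_n}) (W : {vspace 'rV[CC]_n}) : {vspace 'rV[CC]_n} :=
  (<<[seq w *m X | X <- (vbasis E' : seq _), w <- (vbasis W : seq _)]>>)%VS.

Definition sigma (E : {vspace 'M[CC]_n}) (H : 'I_5 -> {vspace 'rV[CC]_n}) (zeta : 'rV[CC]_n) : nat :=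
  \dim (mult_image (Ezeta E zeta) (H (inord 4))).

End Hodge.

(* Write V = zeta E, a subspace of H^{1,3} of dimension codim_E E_zeta, and
   M = E_zeta H^{4,0}, a subspace of H^{3,1} of dimension sigma_zeta.  For
   phi in E, psi in E_zeta and w in H^{4,0}, the infinitesimal isometry
   property and commutativity give
     Q(psi w, phi zeta) = - Q(w, psi phi zeta) = - Q(w, phi psi zeta) = 0,
   so M is Q-orthogonal to V.  By the Hodge-Riemann relations H^{3,1} pairs
   only with H^{1,3}, and Q is non-degenerate, so M embeds into the dual of a
   complement of V in H^{1,3}: sigma_zeta <= h^{1,3} - dim V. *)
From mathcomp Require Import all_boot all_order all_algebra.
From mathcomp Require Import complex Rstruct.
Set Implicit Arguments. Unset Strict Implicit. Unset Printing Implicit Defensive.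
Import Order.TTheory GRing.Theory Num.Theory.
Local Open Scope ring_scope.

Lemma mx11_eq0 (R : nzRingType) (A : 'M[R]_1) : (A == 0) = (A 0 0 == 0).
Proof.
apply/eqP/eqP => [->|A00]; first by rewrite mxE.
by rewrite [A]mx11_scalar A00; apply/matrixP => i j; rewrite !mxE mul0rn.
Qed.

Section Pairing.
Variables (n : nat) (Qm : 'M[rat]_n).

Definition lorth (v : 'rV[CC]_n) : {vspace 'rV[CC]_n} :=
  lker (linfun (mulmxr (Qc Qm *m v^T))).

Definition rorth (m : 'rV[CC]_n) : {vspace 'rV[CC]_n} :=
  lker (linfun (mulmxr (m *m Qc Qm)^T)).

Lemma mem_lorth m v : (m \in lorth v) = (bil Qm m v == 0).
Proof. by rewrite memv_ker lfunE /= /bil mulmxA mx11_eq0. Qed.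

Lemma mem_rorth m u : (u \in rorth m) = (bil Qm m u == 0).
Proof.
rewrite memv_ker lfunE /= /bil -[u in u *m _]trmxK -trmx_mul trmx_eq0.
by rewrite mx11_eq0.
Qed.

Lemma bil0r m : bil Qm m 0 = 0.
Proof. by rewrite /bil trmx0 mulmx0 mxE. Qed.

Lemma bil_conj m u : bil Qm (vconj m) (vconj u) = (bil Qm m u)^*.
Proof.
have QcR : map_mx Num.conj (Qc Qm) = Qc Qm.
  by apply/matrixP => i j; rewrite !mxE fmorph_rat.
by rewrite /bil /vconj map_trmx -{1}QcR -!map_mxM mxE.
Qed.

Lemma bil_nondeg m : Qm \in unitmx -> (forall u, bil Qm m u = 0) -> m = 0.
Proof.
move=> Qm_unit m_orth.
have mQ0 : m *m Qc Qm = 0.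
  apply/rowP => j; rewrite [RHS]mxE.
  have := m_orth (delta_mx 0 j).
  rewrite /bil trmx_delta mxE (bigD1 j) //= !mxE !eqxx mulr1.
  rewrite [X in _ + X]big1 ?addr0 // => k kj.
  by rewrite [delta_mx _ _ _ _]mxE (negbTE kj) mulr0.
have Qc_unit : Qc Qm \in unitmx by rewrite /Qc map_unitmx.
by rewrite -[m]mulmx1 -(mulmxV Qc_unit) mulmxA mQ0 mul0mx.
Qed.

(* The pairing with a basis of W maps M injectively into 'rV_(\dim W). *)
Lemma dimv_leq_of_pairing (M W : {vspace 'rV[CC]_n}) :
    (forall m, m \in M -> (forall w, w \in W -> bil Qm m w = 0) -> m = 0) ->
  (\dim M <= \dim W)%N.
Proof.
move=> M_W_nondeg.
set b := vbasis W.
pose G : 'M[CC]_(n, \dim W) := Qc Qm *m (\matrix_(i < \dim W) tnth b i)^T.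
pose g : 'Hom('rV[CC]_n, 'rV[CC]_(\dim W)) := linfun (mulmxr G).
have gE m i : (g m) 0 i = bil Qm m (tnth b i).
  by rewrite lfunE /= /G /bil mulmxA !mxE; apply: eq_bigr => j _; rewrite !mxE.
have g_inj : (M :&: lker g = 0)%VS.
  apply/eqP; rewrite -subv0; apply/subvP => m /memv_capP [mM].
  rewrite memv_ker => /eqP gm0; rewrite memv0; apply/eqP.
  apply: M_W_nondeg => //.
  suff W_orth : (W <= rorth m)%VS.
    by move=> w /(subvP W_orth); rewrite mem_rorth => /eqP.
  rewrite -(span_basis (vbasisP W)); apply/span_subvP => _ /tnthP [i ->].
  by rewrite mem_rorth -gE gm0 mxE.
rewrite -(limg_dim_eq g_inj).
by have := dimvS (subvf (g @: M)); rewrite dimvf /dim /= mul1n.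
Qed.

End Pairing.

Section HodgeRiemann.
Variables (n : nat) (Qm : 'M[rat]_n) (H : 'I_5 -> {vspace 'rV[CC]_n}).
Hypothesis PHS : is_PHS4 Qm H.

Lemma mem_Fil (p : nat) (i : 'I_5) u : (p <= i)%N -> u \in H i -> u \in Fil H p.
Proof. by move=> pi; apply/subvP; apply: (sumv_sup i) => //; exact: subvv. Qed.

Lemma bil_H3_orth (i : 'I_5) m u :
  i != inord 1 -> u \in H i -> m \in H (inord 3) -> bil Qm m u = 0.
Proof.
have [_ _ Hconj FilQ _] := PHS.
move=> i_neq1 uH mH; case: (leqP 2 i) => i_ge2.
  apply: (FilQ 3%N); first by apply: (mem_Fil (i := inord 3)); rewrite ?inordK.
  exact: (mem_Fil (i := i)).
(* i = 0: conjugate both vectors into H^{1,3} x H^{4,0} and use Q(F^1, F^4) = 0 *)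
have i0 : rev_ord (inord 4 : 'I_5) = i.
  apply/val_inj => /=; rewrite inordK //.
  move: i_neq1 i_ge2; rewrite -(inj_eq val_inj) /= inordK //.
  by case: (val i) => [|[|k]].
have m1 : vconj m \in H (inord 1).
  by rewrite Hconj (_ : rev_ord _ = inord 3) //; apply/val_inj; rewrite /= !inordK.
have u4 : vconj u \in H (inord 4) by rewrite Hconj i0.
have := FilQ 1%N _ _ (mem_Fil (p := 1) _ m1) (mem_Fil (p := 4) _ u4).
by rewrite bil_conj !inordK // => /(_ isT isT) /eqP; rewrite conjC_eq0 => /eqP.
Qed.

Lemma H3_eq0_of_orth_H1 m :
    m \in H (inord 3) -> (forall u, u \in H (inord 1) -> bil Qm m u = 0) ->
  m = 0.
Proof.
have [[_ Qm_unit] [_ sumH] _ _ _] := PHS.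
move=> mH3 m_orth; apply: (bil_nondeg Qm_unit) => u; apply/eqP.
suff /subvP/(_ u (memvf u)) : (fullv <= rorth Qm m)%VS by rewrite mem_rorth.
rewrite -sumH; apply/subv_sumP => i _; apply/subvP => v vH.
rewrite mem_rorth; apply/eqP.
have [i1|i_neq1] := eqVneq i (inord 1); first by apply: m_orth; rewrite -i1.
exact: (bil_H3_orth i_neq1).
Qed.

Lemma dim_orth_H3_H1 (M V : {vspace 'rV[CC]_n}) :
    (M <= H (inord 3))%VS -> (V <= H (inord 1))%VS ->
    (forall m v, m \in M -> v \in V -> bil Qm m v = 0) ->
  (\dim M + \dim V <= \dim (H (inord 1)))%N.
Proof.
move=> MH3 VH1 MV_orth; set W := (H (inord 1) :\: V)%VS.
have WV_H1 : (W + V)%VS = H (inord 1) by rewrite addv_diff; apply/addv_idPl.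
have dimWV : (\dim W + \dim V = \dim (H (inord 1)))%N.
  by rewrite -dimv_disjoint_sum ?capv_diff // WV_H1.
rewrite -dimWV leq_add2r; apply: (@dimv_leq_of_pairing _ Qm) => m mM m_orthW.
apply: H3_eq0_of_orth_H1; first exact: (subvP MH3).
suff H1_orth : (H (inord 1) <= rorth Qm m)%VS.
  by move=> u /(subvP H1_orth); rewrite mem_rorth => /eqP.
rewrite -WV_H1 subv_add; apply/andP; split; apply/subvP => u u_in.
  by rewrite mem_rorth m_orthW.
by rewrite mem_rorth MV_orth.
Qed.

End HodgeRiemann.

Section IntegralElement.
Variables (n : nat) (Qm : 'M[rat]_n) (H : 'I_5 -> {vspace 'rV[CC]_n}).
Variables (E : {vspace 'M[CC]_n}) (zeta : 'rV[CC]_n).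
Hypothesis intE : integral_element Qm H E.

Let act_zeta := linfun (fun X : 'M[CC]_n => zeta *m X).

Lemma mem_Ezeta X : (X \in Ezeta E zeta) = (X \in E) && (zeta *m X == 0).
Proof. by rewrite /Ezeta memv_cap memv_ker lfunE. Qed.

Lemma codim_Ezeta : (\dim (Ezeta E zeta) + \dim (act_zeta @: E) = \dim E)%N.
Proof. exact: limg_ker_dim. Qed.

Lemma mul_Hz X (p : int) u : X \in E -> u \in Hz H p -> u *m X \in Hz H (p - 1).
Proof. by move=> XE; have [_] := intE.1 X XE; apply. Qed.

Lemma act_zeta_sub_H1 : zeta \in H (inord 2) -> (act_zeta @: E <= H (inord 1))%VS.
Proof.
move=> zH2; apply/subvP => _ /memv_imgP [X XE ->].
by rewrite lfunE; exact: (mul_Hz (p := Posz 2) XE zH2).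
Qed.

Lemma mult_image_sub_H3 : (mult_image (Ezeta E zeta) (H (inord 4)) <= H (inord 3))%VS.
Proof.
apply/span_subvP => _ /allpairsP [[Y w] [/= Yb wb ->]].
move: (vbasis_mem Yb); rewrite mem_Ezeta => /andP [YE _].
exact: (mul_Hz (p := Posz 4) YE (vbasis_mem wb)).
Qed.

Lemma bil_mult_image_act_zeta m v :
    m \in mult_image (Ezeta E zeta) (H (inord 4)) -> v \in (act_zeta @: E)%VS ->
  bil Qm m v = 0.
Proof.
move=> mM /memv_imgP [X XE ->]; rewrite lfunE /=; apply/eqP.
rewrite -mem_lorth; move: m mM; apply/subvP.
apply/span_subvP => _ /allpairsP [[Y w] [/= Yb wb ->]].
move: (vbasis_mem Yb); rewrite mem_Ezeta => /andP [YE /eqP zY0].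
have [Y_skew _] := intE.1 Y YE.
have XY : X *m Y = Y *m X by apply/eqP; rewrite -subr_eq0; apply/eqP; exact: intE.2.
have := Y_skew w (zeta *m X).
by rewrite -mulmxA XY mulmxA zY0 mul0mx bil0r addr0 mem_lorth => ->.
Qed.

Lemma sigma_add_dim_leq : is_PHS4 Qm H -> zeta \in H (inord 2) ->
  (sigma E H zeta + \dim E <= \dim (H (inord 1)) + \dim (Ezeta E zeta))%N.
Proof.
move=> PHS zH2; rewrite -codim_Ezeta addnCA addnC leq_add2r.
exact: (dim_orth_H3_H1 PHS mult_image_sub_H3 (act_zeta_sub_H1 zH2)
  bil_mult_image_act_zeta).
Qed.

End IntegralElement.

Theorem proposition5p7 (n : nat) (Qm : 'M[rat]_n)
    (H : 'I_5 -> {vspace 'rV[CC]_n}) (E : {vspace 'M[CC]_n}) (zeta : 'rV[CC]_n) :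
  is_PHS4 Qm H ->
  integral_element Qm H E ->
  vconj zeta = zeta ->
  zeta \in H (inord 2) ->
  ((\dim E)%:Z - (\dim (Ezeta E zeta))%:Z
     <= (\dim (H (inord 1)))%:Z - (sigma E H zeta)%:Z)%R.
Proof.
move=> PHS intE _ zH2.
by rewrite lerBrDl addrA lerBlDr -!PoszD lez_nat (sigma_add_dim_leq intE PHS zH2).
Qed.
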